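(* Let $n\ge 4$ and let $G$ be a graph having the maximum value of $cM_2$ among all connected graphs of order $n$. Then $|M(G)|<\frac{5352}{10000}n$.
   Context: All graphs are finite and simple. For a graph $G$ and a vertex $u$, $d_u(G)$ denotes the degree of $u$ in $G$. The complementary second Zagreb index of $G$ is $cM_2(G)=\sum_{uv\in E(G)}\left|(d_u(G))^2-(d_v(G))^2\right|$. $M(G)$ denotes the set of vertices of $G$ having the maximum degree of $G$. *)

From mathcomp Require Import all_boot.
Set Implicit Arguments. Unset Strict Implicit. Unset Printing Implicit Defensive.

Definition simple_graph (n : nat) (g : rel 'I_n) : Prop :=
  symmetric g /\ irreflexive g.

Definition connected_graph (n : nat) (g : rel 'I_n) : Prop :=
  forall x y : 'I_n, connect g x y.

Definition deg (n : nat) (g : rel 'I_n) (u : 'I_n) : nat :=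
  #|[set v | g u v]|.

Definition absdiff (a b : nat) : nat := (a - b) + (b - a).

Definition cM2 (n : nat) (g : rel 'I_n) : nat :=
  \sum_(u : 'I_n) \sum_(v : 'I_n | (u < v) && g u v)
      absdiff (deg g u ^ 2) (deg g v ^ 2).

Definition maxdeg (n : nat) (g : rel 'I_n) : nat :=
  \max_(u : 'I_n) deg g u.

Definition maxdeg_set (n : nat) (g : rel 'I_n) : {set 'I_n} :=
  [set u | deg g u == maxdeg g].

(* For every edge uv, |d_u^2 - d_v^2| <= (D^2 - d_u^2) + (D^2 - d_v^2), where D
   is the maximum degree; double counting gives cM2(G) <= sum_u d_u (D^2 - d_u^2),
   in which only vertices of non-maximum degree contribute, each at most
   2 D^3 / 5 because d (D^2 - d^2) <= 2 D^3 / (3 sqrt 3) < 2 D^3 / 5.  Hence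
   5 cM2(G) <= 2 (n - |M(G)|) (n-1)^3.  On the other hand the complete split
   graph with a clique of a ~ 2n/5 vertices joined to an independent set of
   n - a vertices has cM2 >= a (n - a) ((n-1)^2 - a^2) > 0.18592 n (n-1)^3,
   and comparing the two bounds at a maximiser G gives |M(G)| < 0.5352 n. *)
From mathcomp Require Import all_boot zify.

Set Implicit Arguments. Unset Strict Implicit. Unset Printing Implicit Defensive.

Lemma absdiffC a b : absdiff a b = absdiff b a.
Proof. exact: addnC. Qed.

Lemma leq_absdiff a b : a - b <= absdiff a b.
Proof. exact: leq_addr. Qed.

Lemma absdiff_le_gaps a b c : a <= c -> b <= c -> absdiff a b <= (c - a) + (c - b).
Proof. rewrite /absdiff; lia. Qed.

Lemma sqr_gap_bound d D : d <= D -> 5 * d * (D ^ 2 - d ^ 2) <= 2 * D ^ 3.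
Proof.
move=> le_dD; have [k ->] : exists k, D = d + k by exists (D - d); rewrite subnKC.
rewrite subn_sqr addKn !expnS expn0.
have [[e ->] | [e ->]] : (exists e, d = k + e) \/ (exists e, k = d + e).
  by case: (leqP k d) => ?; [left; exists (d - k) | right; exists (k - d)]; lia.
- have : k * e <= k * k + e * e by nia.
  nia.
- nia.
Qed.

(* The witness is a = floor(2n/5), written out by the residue of n - 4 mod 5;
   asymptotically the right side is 3125 * 0.2016 n^4, against 581 n^4. *)
Lemma split_size_bound n : 4 <= n ->
  exists2 a, 0 < a < n &
    581 * n * n.-1 ^ 3 < 3125 * (a * ((n - a) * (n.-1 ^ 2 - a ^ 2))).
Proof.
move=> n_ge4.
suff [a [c [-> a_gt0 ineq]]] : exists a c, [/\ n = a + c + 1, 0 < a &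
    581 * (a + c + 1) * (a + c) ^ 3 < 3125 * (a * ((c + 1) * (c * (2 * a + c))))].
  exists a; first lia.
  have -> : (a + c + 1).-1 = a + c by lia.
  have -> : a + c + 1 - a = c + 1 by lia.
  by have -> : (a + c) ^ 2 - a ^ 2 = c * (2 * a + c) by rewrite subn_sqr addKn; nia.
have [p [r [lt_r5 ->]]] : exists p r, r < 5 /\ n = 5 * p + 4 + r.
  by exists ((n - 4) %/ 5), ((n - 4) %% 5); lia.
case: r lt_r5 => [|[|[|[|[|//]]]]] _;
  [exists (2 * p + 1), (3 * p + 2) | exists (2 * p + 2), (3 * p + 2)
  | exists (2 * p + 2), (3 * p + 3) | exists (2 * p + 2), (3 * p + 4)
  | exists (2 * p + 3), (3 * p + 4)];
  split; rewrite ?expnS ?expn0; nia.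
Qed.

Lemma exchange_big_rel (R : Type) (idx : R) (op : Monoid.com_law idx)
    (T : finType) (P : rel T) (F : T -> T -> R) :
  \big[op/idx]_u \big[op/idx]_(v | P u v) F u v =
  \big[op/idx]_u \big[op/idx]_(v | P v u) F v u.
Proof. by rewrite (exchange_big_dep xpredT). Qed.

Lemma leq_sum_subset (T : finType) (P Q : pred T) (F : T -> nat) :
  (forall i, P i -> Q i) -> \sum_(i | P i) F i <= \sum_(i | Q i) F i.
Proof. exact: (sub_le_big leqnn (fun m n => leq_addr n m)). Qed.

Section SimpleGraph.

Variables (n : nat) (g : rel 'I_n).
Hypotheses (g_sym : symmetric g) (g_irr : irreflexive g).

Local Notation d := (deg g).

Lemma deg_le_pred u : d u <= n.-1.
Proof.
rewrite -[n in n.-1]card_ord -(cardsC1 u); apply/subset_leq_card/subsetP => v.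
by rewrite !inE; apply: contraTneq => ->; rewrite g_irr.
Qed.

Lemma sum_adj_deg (f : 'I_n -> nat) :
  \sum_u \sum_(v | g u v) f u = \sum_u d u * f u.
Proof. by apply: eq_bigr => u _; rewrite sum_nat_cond_const. Qed.

Lemma sum_adj_sym (F : 'I_n -> 'I_n -> nat) :
  \sum_u \sum_(v | g u v) F u v = \sum_u \sum_(v | g u v) F v u.
Proof. by rewrite exchange_big_rel; under eq_bigr do under eq_bigl do rewrite g_sym. Qed.

Lemma cM2_adj_sum :
  2 * cM2 g = \sum_u \sum_(v | g u v) absdiff (d u ^ 2) (d v ^ 2).
Proof.
set F := fun u v => absdiff (d u ^ 2) (d v ^ 2).
have lower_half : \sum_u \sum_(v | g u v && ~~ (u < v)) F u v = cM2 g.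
  rewrite (exchange_big_rel _ (fun u v => g u v && ~~ (u < v))).
  apply: eq_bigr => u _; apply: eq_big => [v | v _]; last exact: absdiffC.
  rewrite g_sym; case: (ltngtP u v) => [||/val_inj ->]; rewrite ?andbT ?andbF ?g_irr //.
rewrite mul2n -addnn {1}/cM2 -lower_half -big_split /=.
apply: eq_bigr => u _; rewrite [RHS](bigID (fun v : 'I_n => u < v)) /=.
by congr (_ + _); apply: eq_bigl => v; rewrite andbC.
Qed.

Lemma cM2_le_sum_deg_gap :
  cM2 g <= \sum_u d u * (maxdeg g ^ 2 - d u ^ 2).
Proof.
set f := fun u => maxdeg g ^ 2 - d u ^ 2.
have d_le_max u : d u ^ 2 <= maxdeg g ^ 2 by rewrite leq_exp2r //; exact: leq_bigmax.
rewrite -(leq_pmul2l (isT : 0 < 2)) cM2_adj_sum.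
apply: (@leq_trans (\sum_u \sum_(v | g u v) (f u + f v))).
  by apply: leq_sum => u _; apply: leq_sum => v _; apply: absdiff_le_gaps.
rewrite mul2n -addnn; under eq_bigr do rewrite big_split /=.
by rewrite big_split /= (sum_adj_sym (fun _ v => f v)) sum_adj_deg.
Qed.

Lemma cM2_le_nonmax :
  5 * cM2 g <= #|~: maxdeg_set g| * (2 * n.-1 ^ 3).
Proof.
have D_le : maxdeg g <= n.-1 by apply/bigmax_leqP => u _; exact: deg_le_pred.
rewrite -sum_nat_const; apply: leq_trans (leq_mul (leqnn 5) cM2_le_sum_deg_gap) _.
rewrite big_distrr /= (bigID (mem (maxdeg_set g))) /= big1 => [|u]; last first.
  by rewrite inE => /eqP ->; rewrite subnn !muln0.
rewrite add0n; under [X in _ <= X]eq_bigl => u do rewrite in_setC.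
apply: leq_sum => u _; rewrite mulnA.
apply: leq_trans (sqr_gap_bound (leq_bigmax u)) _.
by rewrite leq_mul2l leq_exp2r // D_le orbT.
Qed.

End SimpleGraph.

Definition complete_split n (K : {set 'I_n}) : rel 'I_n :=
  fun u v => (u != v) && ((u \in K) || (v \in K)).

Section CompleteSplit.

Variables (n : nat) (K : {set 'I_n}).

Local Notation g := (complete_split K).

Lemma complete_split_simple : simple_graph g.
Proof. by split=> [u v | u]; rewrite /complete_split ?eqxx // eq_sym orbC. Qed.

Lemma complete_split_connected : K != set0 -> connected_graph g.
Proof.
case/set0Pn=> z zK.
have to_z w : connect g w z.
  case: (eqVneq w z) => [-> | ne]; first exact: connect0.
  by apply: connect1; rewrite /complete_split ne zK orbT.
move=> x y; apply: connect_trans (to_z x) _.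
case: (eqVneq y z) => [-> | ne]; first exact: connect0.
by apply: connect1; rewrite /complete_split eq_sym ne zK.
Qed.

Lemma deg_complete_split_in u : u \in K -> deg g u = n.-1.
Proof.
move=> uK; rewrite -[n in n.-1]card_ord -(cardsC1 u) /deg.
by apply: eq_card => v; rewrite !inE /complete_split uK andbT eq_sym.
Qed.

Lemma deg_complete_split_out u : u \notin K -> deg g u = #|K|.
Proof.
move=> uNK; rewrite /deg; apply: eq_card => v; rewrite inE /complete_split (negPf uNK).
by case: (eqVneq u v) => [<- | _]; rewrite ?(negPf uNK).
Qed.

Lemma cM2_complete_split :
  #|K| * (#|~: K| * (n.-1 ^ 2 - #|K| ^ 2)) <= cM2 g.
Proof.
have [g_sym g_irr] := complete_split_simple.
set C := n.-1 ^ 2 - #|K| ^ 2.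
have double_count : 2 * (#|K| * (#|~: K| * C)) =
    \sum_(u in K) \sum_(v in ~: K) C + \sum_(u in ~: K) \sum_(v in K) C.
  by rewrite !sum_nat_const mul2n -addnn [#|~: K| * (_ * _)]mulnCA.
rewrite -(leq_pmul2l (isT : 0 < 2)) cM2_adj_sum // double_count.
rewrite [X in _ <= X](bigID (mem K)) /=.
apply: leq_add; [|under eq_bigl => u do rewrite in_setC]; apply: leq_sum => u uK.
- apply: (@leq_trans (\sum_(v in ~: K) absdiff (deg g u ^ 2) (deg g v ^ 2))).
    apply: leq_sum => v; rewrite inE => vNK.
    by rewrite (deg_complete_split_in uK) (deg_complete_split_out vNK) leq_absdiff.
  apply: leq_sum_subset => v; rewrite inE => vNK.
  by rewrite /complete_split uK andbT; apply: contraNneq vNK => <-.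
- apply: (@leq_trans (\sum_(v in K) absdiff (deg g u ^ 2) (deg g v ^ 2))).
    apply: leq_sum => v vK.
    rewrite (deg_complete_split_out uK) (deg_complete_split_in vK).
    by rewrite absdiffC leq_absdiff.
  apply: leq_sum_subset => v vK.
  by rewrite /complete_split vK orbT andbT; apply: contraNneq uK => ->.
Qed.

End CompleteSplit.

Lemma exists_set_card n a : a <= n -> exists K : {set 'I_n}, #|K| = a.
Proof.
move=> le_an; exists (widen_ord le_an @: setT).
rewrite card_imset ?cardsT ?card_ord //.
by move=> i j [] /val_inj.
Qed.

Theorem corollary1 (n : nat) (g : rel 'I_n) :
  4 <= n ->
  simple_graph g -> connected_graph g ->
  (forall h : rel 'I_n, simple_graph h -> connected_graph h -> cM2 h <= cM2 g) ->
  #|maxdeg_set g| * 10000 < 5352 * n.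
Proof.
move=> n_ge4 [g_sym g_irr] _ g_max.
have [a /andP [a_gt0 a_lt_n] bound] := split_size_bound n_ge4.
have [K cardK] := exists_set_card (ltnW a_lt_n).
have K_neq0 : K != set0 by rewrite -card_gt0 cardK.
have cardCK : #|~: K| = n - a by rewrite cardsCs setCK card_ord cardK.
have lower := leq_trans (cM2_complete_split K)
  (g_max _ (complete_split_simple K) (complete_split_connected K_neq0)).
rewrite cardK cardCK in lower.
have upper := cM2_le_nonmax g_sym g_irr.
have n1_gt0 : 0 < n.-1 ^ 3 by rewrite expn_gt0 -subn1 subn_gt0 (leq_trans _ n_ge4).
have : 581 * n * n.-1 ^ 3 < 1250 * #|~: maxdeg_set g| * n.-1 ^ 3.
  apply: leq_trans bound _; rewrite -[3125]/(625 * 5) -mulnA.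
  have := leq_mul (leqnn 625) (leq_trans (leq_mul (leqnn 5) lower) upper).
  lia.
rewrite ltn_pmul2r // cardsCs setCK card_ord.
have := max_card (mem (maxdeg_set g)); rewrite card_ord.
(* Numerals from 5000 on are opaque Nat.of_num_uint terms that lia cannot read. *)
by rewrite -[10000]/(8 * 1250) -[5352]/(8 * 669); lia.
Qed.
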